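(* Let $S$ be a dense subsemigroup of $((0,\infty),+)$ and let $\mathcal{K}=\{A\subseteq S: S\setminus A \text{ is not piecewise syndetic near zero}\}$. Then $\mathcal{K}$ is a filter on $S$, $\mathrm{Cl}\,K(O^{+}(S))=\overline{\mathcal{K}}$, and this set is a compact subsemigroup of $\beta S$.
   Context: ''Dense'' means dense in the usual topology of $(0,\infty)$. $\beta S$ is the Stone–Čech compactification of the discrete set $S$ (ultrafilters on $S$), with $+$ extended so that $(\beta S,+)$ is a compact right topological semigroup: $A\in p+q$ iff $\{x\in S:-x+A\in q\}\in p$, where $-x+A=\{y\in S:x+y\in A\}$. $O^{+}(S)=\{p\in\beta S: S\cap(0,\epsilon)\in p\text{ for every }\epsilon>0\}$, a compact right topological subsemigroup of $\beta S$; $K(O^{+}(S))$ is its smallest two-sided ideal and $\mathrm{Cl}$ denotes closure in $\beta S$. For a filter $\mathcal{K}$ on $S$, $\overline{\mathcal{K}}=\{p\in\beta S:\mathcal{K}\subseteq p\}$. A subset $A\subseteq S$ is piecewise syndetic near zero iff there exist sequences $\langle F_n\rangle_{n=1}^\infty$ and $\langle\delta_n\rangle_{n=1}^\infty$ such that (1) for each $n\in\mathbb{N}$, $F_n$ is a finite nonempty subset of $(0,\frac1n)\cap S$ and $\delta_n\in(0,\frac1n)$, and (2) for every finite nonempty $G\subseteq S$ and every $\mu>0$ there is $x\in(0,\mu)\cap S$ such that for all $n\in\mathbb{N}$, $(G\cap(0,\delta_n))+x\subseteq\bigcup_{t\in F_n}(-t+A)$. *)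

From Stdlib Require Import Reals List.
Open Scope R_scope.

(* Subsets of R are predicates R -> Prop; a point of beta S (an ultrafilter
   on S) is a family of subsets of S, i.e. a predicate (R -> Prop) -> Prop. *)
Definition rset := R -> Prop.
Definition ufam := rset -> Prop.

Definition subset (A B : rset) : Prop := forall x, A x -> B x.

Definition dense_subsemigroup (S : rset) : Prop :=
  (forall x, S x -> 0 < x) /\
  (forall x y, S x -> S y -> S (x + y)) /\
  (forall a b, 0 <= a -> a < b -> exists x, S x /\ a < x /\ x < b).

Definition shift (S : rset) (x : R) (A : rset) : rset :=
  fun y => S y /\ A (x + y).

Definition is_filter (S : rset) (F : ufam) : Prop :=
  (forall A, F A -> subset A S) /\
  F S /\
  ~ F (fun _ => False) /\
  (forall A B, F A -> F B -> F (fun x => A x /\ B x)) /\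
  (forall A B, F A -> subset A B -> subset B S -> F B).

Definition is_ultra (S : rset) (p : ufam) : Prop :=
  is_filter S p /\
  (forall A, subset A S -> p A \/ p (fun x => S x /\ ~ A x)).

Definition uplus (S : rset) (p q : ufam) : ufam :=
  fun A => subset A S /\ p (fun x => S x /\ q (shift S x A)).

Definition Oplus (S : rset) (p : ufam) : Prop :=
  is_ultra S p /\
  forall eps, 0 < eps -> p (fun x => S x /\ 0 < x /\ x < eps).

(* two-sided ideals of O^+(S) and the smallest ideal K(O^+(S))
   (the intersection of all ideals, which is the smallest ideal) *)
Definition is_ideal_Oplus (S : rset) (I : ufam -> Prop) : Prop :=
  (forall p, I p -> Oplus S p) /\
  (exists p, I p) /\
  (forall p q, Oplus S p -> I q -> I (uplus S p q)) /\
  (forall p q, I p -> Oplus S q -> I (uplus S p q)).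

Definition K_Oplus (S : rset) (p : ufam) : Prop :=
  Oplus S p /\ forall I, is_ideal_Oplus S I -> I p.

Definition Cl (S : rset) (X : ufam -> Prop) (p : ufam) : Prop :=
  is_ultra S p /\ forall A, p A -> exists q, X q /\ q A.

Definition is_open (S : rset) (U : ufam -> Prop) : Prop :=
  forall p, U p -> is_ultra S p /\
    exists A, p A /\ forall q, is_ultra S q -> q A -> U q.

Definition compact (S : rset) (X : ufam -> Prop) : Prop :=
  forall (I : Type) (U : I -> ufam -> Prop),
    (forall i, is_open S (U i)) ->
    (forall p, X p -> exists i, U i p) ->
    exists l : list I, forall p, X p -> exists i, In i l /\ U i p.

Definition compact_subsemigroup (S : rset) (X : ufam -> Prop) : Prop :=
  (forall p, X p -> is_ultra S p) /\
  (exists p, X p) /\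
  (forall p q, X p -> X q -> X (uplus S p q)) /\
  compact S X.

(* piecewise syndetic near zero; sequences indexed by n >= 1 *)
Definition PSNZ (S : rset) (A : rset) : Prop :=
  exists (F : nat -> list R) (delta : nat -> R),
    (forall n, (1 <= n)%nat ->
       F n <> nil /\
       (forall t, In t (F n) -> S t /\ 0 < t /\ t < / INR n) /\
       0 < delta n /\ delta n < / INR n) /\
    (forall (G : list R) (mu : R),
       G <> nil -> (forall g, In g G -> S g) -> 0 < mu ->
       exists x, S x /\ 0 < x /\ x < mu /\
         forall n, (1 <= n)%nat ->
           forall g, In g G -> 0 < g -> g < delta n ->
             exists t, In t (F n) /\ shift S t A (g + x)).

Definition Kfam (S : rset) (A : rset) : Prop :=
  subset A S /\ ~ PSNZ S (fun x => S x /\ ~ A x).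

Definition Kbar (S : rset) (F : ufam) (p : ufam) : Prop :=
  is_ultra S p /\ forall A, F A -> p A.

From Pilot Require Import Defs.
From Stdlib Require Import Reals List Lra Lia.
From Stdlib Require Import Classical ClassicalEpsilon FunctionalExtensionality PropExtensionality.
From mathcomp Require classical_sets.
Open Scope R_scope.

(* The points q of K(O^+(S)) are those with q in O^+(S) + r + q for every r in O^+(S); they
   exist because, by Zorn's lemma and compactness, O^+(S) has a minimal closed left ideal, and
   each of its points generates it.  Such a q contains A iff A is piecewise syndetic near zero:
   from q = s + r + q, compactness of O^+(S) yields finitely many shifts -t + A covering a
   neighbourhood of zero; conversely the data witnessing piecewise syndeticity define a point r
   of O^+(S) such that q0 + r (q0 in K) contains, for every n, some -t + A with t in F_n, and a
   point v of O^+(S) concentrated on these t gives v + q0 + r in K containing A.  So the family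
   K is the intersection of the ultrafilters in K(O^+(S)): it is a filter whose closure-bar is
   Cl K(O^+(S)), compact as every closure-bar is, and a semigroup as K(O^+(S)) is an ideal. *)

Definition meet (S : rset) (L : list rset) : rset :=
  fun x => S x /\ forall B, In B L -> B x.

Definition FIP (S : rset) (H : ufam) : Prop :=
  forall L, (forall B, In B L -> H B) -> exists x, meet S L x.

Definition chain {T : Type} (C : (T -> Prop) -> Prop) : Prop :=
  forall X Y, C X -> C Y -> (forall x, X x -> Y x) \/ (forall x, Y x -> X x).

Lemma meet_partition S (X Y : ufam) L : (forall B, In B L -> X B \/ Y B) ->
  exists L1 L2, (forall B, In B L1 -> X B) /\ (forall B, In B L2 -> Y B) /\
    forall x, meet S L1 x -> meet S L2 x -> meet S L x.
Proof.
induction L as [|C L IH]; intros hL.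
- exists nil, nil; split; [intros B []|split; [intros B []|]].
  intros x hx _; exact hx.
- destruct IH as [L1 [L2 [h1 [h2 h3]]]]; [intros B hB; apply hL; right; exact hB|].
  destruct (hL C (or_introl eq_refl)) as [hC|hC].
  + exists (C :: L1), L2; split; [|split]; auto.
    * intros B [<-|hB]; auto.
    * intros x [Sx hx1] hx2; split; auto.
      intros B [<-|hB]; [apply hx1; left; reflexivity|].
      apply (h3 x); auto. split; auto; intros B' hB'; apply hx1; right; exact hB'.
  + exists L1, (C :: L2); split; [|split]; auto.
    * intros B [<-|hB]; auto.
    * intros x hx1 [Sx hx2]; split; auto.
      intros B [<-|hB]; [apply hx2; left; reflexivity|].
      apply (h3 x); auto. split; auto; intros B' hB'; apply hx2; right; exact hB'.
Qed.

Lemma list_choice (A B : Type) (R : A -> B -> Prop) (l : list A) :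
  (forall a, In a l -> exists b, R a b) ->
  exists l', (forall a, In a l -> exists b, In b l' /\ R a b) /\
             (forall b, In b l' -> exists a, In a l /\ R a b).
Proof.
induction l as [|a l IH]; intros hl.
- exists nil; split; [intros a []|intros b []].
- destruct IH as [l' [h1 h2]]; [intros a' ha'; apply hl; right; exact ha'|].
  destruct (hl a (or_introl eq_refl)) as [b hb].
  exists (b :: l'); split.
  + intros a' [<-|ha']; [exists b; split; [left|]; auto|].
    destruct (h1 a' ha') as [b' [hb' R']]; exists b'; split; [right|]; auto.
  + intros b' [<-|hb']; [exists a; split; [left|]; auto|].
    destruct (h2 b' hb') as [a' [ha' R']]; exists a'; split; [right|]; auto.
Qed.

Lemma chain_list_bound (T U : Type) (C : T -> Prop) (le : T -> T -> Prop)
    (R : T -> U -> Prop) (l : list U) :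
  (forall a b, C a -> C b -> le a b \/ le b a) ->
  (forall a b x, le a b -> R a x -> R b x) ->
  (forall x, In x l -> exists a, C a /\ R a x) ->
  l = nil \/ exists a, C a /\ forall x, In x l -> R a x.
Proof.
intros Htot Hmono; induction l as [|x l IH]; intros hl; [left; reflexivity|right].
destruct (hl x (or_introl eq_refl)) as [a [Ca Rax]].
destruct IH as [->|[b [Cb Rb]]]; [intros y hy; apply hl; right; exact hy| |].
- exists a; split; auto. intros y [<-|[]]; exact Rax.
- destruct (Htot a b Ca Cb) as [hab|hba].
  + exists b; split; auto. intros y [<-|hy]; eauto.
  + exists a; split; auto. intros y [<-|hy]; eauto.
Qed.

Section Filters.
Variables (S : rset) (F : ufam).
Hypothesis HF : is_filter S F.

Lemma filter_sub A : F A -> subset A S.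
Proof. destruct HF as [h _]; auto. Qed.

Lemma filter_full : F S.
Proof. destruct HF as [_ [h _]]; exact h. Qed.

Lemma filter_meet2 A B : F A -> F B -> F (fun x => A x /\ B x).
Proof. destruct HF as [_ [_ [_ [h _]]]]; auto. Qed.

Lemma filter_super A B : F A -> subset A B -> subset B S -> F B.
Proof. destruct HF as [_ [_ [_ [_ h]]]]; eauto. Qed.

Lemma filter_weaken A (P : R -> Prop) :
  F A -> (forall x, S x -> A x -> P x) -> F (fun x => S x /\ P x).
Proof.
intros FA hP. apply (filter_super A); auto; [|intros x [Sx _]; exact Sx].
intros x Ax. assert (Sx := filter_sub A FA x Ax). split; auto.
Qed.

Lemma filter_nonempty A : F A -> exists x, S x /\ A x.
Proof.
intros FA. apply NNPP; intros hn. destruct HF as [_ [_ [h0 [_ hsup]]]].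
apply h0, (hsup A); auto; [|intros x []].
intros x Ax; apply hn; exists x; split; auto. exact (filter_sub A FA x Ax).
Qed.

Lemma filter_meet L : (forall B, In B L -> F B) -> F (meet S L).
Proof.
induction L as [|C L IH]; intros hL.
- apply (filter_weaken S); [exact filter_full|]. intros x _ _ B [].
- assert (FC := hL C (or_introl eq_refl)).
  assert (FL := IH (fun B h => hL B (or_intror h))).
  apply (filter_weaken _ _ (filter_meet2 _ _ FL FC)).
  intros x _ [[_ h] Cx] B [<-|hB]; [exact Cx|exact (h B hB)].
Qed.

End Filters.

Lemma ultra_filter S p : is_ultra S p -> is_filter S p.
Proof. intros [h _]; exact h. Qed.

Section Ultrafilters.
Variables (S : rset) (p : ufam).
Hypothesis Hp : is_ultra S p.

Lemma ultra_compl A : subset A S -> ~ p A -> p (fun x => S x /\ ~ A x).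
Proof. destruct Hp as [_ h]; intros AS nA; destruct (h A AS); tauto. Qed.

Lemma ultra_compl_absurd A : p A -> p (fun x => S x /\ ~ A x) -> False.
Proof.
intros pA pnA.
assert (Fp := ultra_filter S p Hp).
destruct (filter_nonempty S p Fp _ (filter_meet2 S p Fp _ _ pA pnA)) as [x [_ [Ax [_ nAx]]]]; auto.
Qed.

Lemma ultra_union (I : Type) (X : I -> rset) (l : list I) :
  (forall i, subset (X i) S) ->
  p (fun y => S y /\ exists i, In i l /\ X i y) -> exists i, In i l /\ p (X i).
Proof.
intros HX; induction l as [|i l IH]; intros H.
- destruct (filter_nonempty S p (ultra_filter S p Hp) _ H) as [x [_ [_ [i [[] _]]]]].
- destruct (classic (p (X i))) as [h|h]; [exists i; split; [left|]; auto|].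
  destruct IH as [j [hj pj]]; [|exists j; split; [right|]; auto].
  apply (filter_weaken S p (ultra_filter S p Hp) _ _
           (filter_meet2 S p (ultra_filter S p Hp) _ _ H (ultra_compl _ (HX i) h))).
  intros y _ [[_ [j [[<-|hj] Xj]]] [_ nX]]; [contradiction|eauto].
Qed.

End Ultrafilters.

Lemma ultra_ext S p q : is_ultra S p -> is_ultra S q -> (forall A, p A -> q A) -> p = q.
Proof.
intros Hp Hq H. apply functional_extensionality; intro A; apply propositional_extensionality.
split; auto. intros qA. apply NNPP; intros npA.
apply (ultra_compl_absurd S q Hq A qA), H, ultra_compl; auto.
exact (filter_sub S q (ultra_filter S q Hq) A qA).
Qed.

Lemma Zorn_union (T : Type) (P : (T -> Prop) -> Prop) :
  (forall C, (forall X, C X -> P X) -> chain C -> P (fun x => exists X, C X /\ X x)) ->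
  exists A, P A /\ forall B, P B -> (forall x, A x -> B x) -> forall x, B x -> A x.
Proof.
intros H. destruct (@classical_sets.Zorn_bigcup T P) as [A [PA HA]].
- intros C CP Ctot.
  replace (classical_sets.bigcup C (fun X => X)) with (fun x => exists X, C X /\ X x).
  + apply H; [exact CP|]. intros X Y hX hY; exact (Ctot X Y hX hY).
  + apply functional_extensionality; intro x; apply propositional_extensionality.
    split; [intros [X [CX Xx]]; exists X; auto|intros [X CX Xx]; exists X; auto].
- exists A; split; [exact PA|]. intros B PB AB. apply NNPP; intros hn.
  apply (HA B); [split; [exact AB|]|exact PB].
  intros hBA; apply hn; exact hBA.
Qed.

Lemma Zorn_inter (T : Type) (B : T -> Prop) (P : (T -> Prop) -> Prop) :
  (forall L, P L -> forall x, L x -> B x) ->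
  (forall C, (forall L, C L -> P L) -> chain C -> P (fun x => B x /\ forall L, C L -> L x)) ->
  exists L, P L /\ forall L', P L' -> (forall x, L' x -> L x) -> forall x, L x -> L' x.
Proof.
intros PB H.
destruct (Zorn_union T (fun U => P (fun x => B x /\ ~ U x))) as [U [PU HU]].
- intros C CP Ctot.
  set (C' := fun L => exists U, C U /\ L = fun x => B x /\ ~ U x).
  replace (fun x => B x /\ ~ (exists X, C X /\ X x)) with (fun x => B x /\ forall L, C' L -> L x).
  + apply H.
    * intros L [V [CV ->]]; exact (CP V CV).
    * intros L1 L2 [V1 [CV1 ->]] [V2 [CV2 ->]].
      destruct (Ctot V1 V2 CV1 CV2) as [h|h]; [right|left]; intros x [Bx nV]; split; auto.
  + apply functional_extensionality; intro x; apply propositional_extensionality. split.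
    * intros [Bx hx]; split; [exact Bx|]. intros [V [CV Vx]].
      destruct (hx _ (ex_intro _ V (conj CV eq_refl))) as [_ nV]; auto.
    * intros [Bx hx]; split; [exact Bx|]. intros L [V [CV ->]]; split; [exact Bx|].
      intros Vx; apply hx; exists V; auto.
- exists (fun x => B x /\ ~ U x); split; [exact PU|].
  intros L' PL' L'L x [Bx nUx].
  assert (E : (fun x => B x /\ ~ ~ L' x) = L').
  { apply functional_extensionality; intro y; apply propositional_extensionality.
    split; [intros [_ h]; apply NNPP; exact h|intros h; split; [exact (PB L' PL' y h)|tauto]]. }
  apply NNPP; intros nL'.
  apply nUx, (HU (fun y => ~ L' y)); [rewrite E; exact PL'| |exact nL'].
  intros y Uy L'y. destruct (L'L y L'y) as [_ nU]; auto.
Qed.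

Lemma maximal_FIP_family S (H : ufam) : (forall B, H B -> subset B S) -> FIP S H ->
  exists G, (forall B, G B -> subset B S) /\ FIP S (fun B => H B \/ G B) /\
    forall C, subset C S ->
      (forall L, (forall B, In B L -> H B \/ G B) -> exists x, meet S L x /\ C x) -> G C.
Proof.
intros HS HFIP.
destruct (Zorn_union rset (fun G => (forall B, G B -> subset B S) /\ FIP S (fun B => H B \/ G B)))
  as [G [[GS GFIP] Gmax]].
- intros C CP Cch. split; [intros B [X [CX XB]]; exact (proj1 (CP X CX) B XB)|].
  intros L hL. destruct (classic (exists X, C X)) as [[X0 CX0]|nC].
  + destruct (chain_list_bound ufam rset C (fun X Y => forall B, X B -> Y B)
                (fun X B => H B \/ X B) L) as [->|[X [CX hX]]].
    * intros X Y hX hY; exact (Cch X Y hX hY).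
    * intros X Y B hXY [h|h]; auto.
    * intros B hB. destruct (hL B hB) as [h|[X [CX XB]]]; [exists X0|exists X]; auto.
    * apply HFIP; intros B [].
    * exact (proj2 (CP X CX) L hX).
  + apply HFIP. intros B hB. destruct (hL B hB) as [h|[X [CX _]]]; [exact h|].
    exfalso; apply nC; eauto.
- exists G; split; [exact GS|split; [exact GFIP|]].
  intros C CS hC. apply (Gmax (fun B => G B \/ B = C)); [split| |right; reflexivity].
  + intros B [h| ->]; auto.
  + intros L hL.
    destruct (meet_partition S (fun B => H B \/ G B) (fun B => B = C) L) as [L1 [L2 [h1 [h2 h3]]]].
    { intros B hB; destruct (hL B hB) as [h|[h|h]]; auto. }
    destruct (hC L1 h1) as [x [hx Cx]]. exists x. apply h3; [exact hx|].
    split; [exact (proj1 hx)|]. intros B hB; rewrite (h2 B hB); exact Cx.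
  + intros B hB; left; exact hB.
Qed.

Lemma ultrafilter_exists S (H : ufam) : (forall B, H B -> subset B S) -> FIP S H ->
  exists p, is_ultra S p /\ forall B, H B -> p B.
Proof.
intros HS HFIP.
destruct (maximal_FIP_family S H HS HFIP) as [G [GS [GFIP Gmax]]].
assert (Gmeet : forall C L, subset C S -> (forall B, In B L -> H B \/ G B) ->
                  (forall x, meet S L x -> C x) -> G C).
{ intros C L0 CS hL0 hC. apply Gmax; [exact CS|]. intros L hL.
  destruct (GFIP (L ++ L0)) as [x [Sx hx]].
  { intros B hB; apply in_app_or in hB; destruct hB; auto. }
  exists x; split; [|apply hC]; (split; [exact Sx|]); intros B hB; apply hx, in_or_app; auto. }
assert (Gsingle : forall A C, H A \/ G A -> subset C S -> (forall x, S x -> A x -> C x) -> G C).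
{ intros A C hA CS hC. apply (Gmeet C (A :: nil) CS); [intros B [<-|[]]; exact hA|].
  intros x [Sx hx]; apply hC; [exact Sx|apply hx; left; reflexivity]. }
exists G; split; [split; [split; [|split; [|split; [|split]]]|]|].
- exact GS.
- apply (Gmeet S nil); [intros x h; exact h|intros B []|intros x [Sx _]; exact Sx].
- intros G0. destruct (GFIP ((fun _ => False) :: nil)) as [x [_ hx]].
  + intros B [<-|[]]; right; exact G0.
  + exact (hx _ (or_introl eq_refl)).
- intros A B GA GB. apply (Gmeet _ (A :: B :: nil)).
  + intros x [Ax _]; exact (GS A GA x Ax).
  + intros C [<-|[<-|[]]]; right; assumption.
  + intros x [_ hx]; split; apply hx; simpl; auto.
- intros A B GA AB BS. apply (Gsingle A); auto.
- intros A AS. destruct (classic (G A)) as [h|nGA]; [left; exact h|right].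
  apply NNPP; intros nGc. apply nGA, Gmax; [exact AS|]. intros L hL.
  apply NNPP; intros hn. apply nGc, (Gmeet _ L); [intros x [Sx _]; exact Sx|exact hL|].
  intros x hx; split; [exact (proj1 hx)|]. intros Ax; apply hn; exists x; auto.
- intros B HB. apply (Gsingle B); [left; exact HB|exact (HS B HB)|auto].
Qed.

Lemma ultra_extends S F (H : ufam) : is_filter S F -> (forall B, H B -> subset B S) ->
  (forall L A, (forall B, In B L -> H B) -> F A -> exists x, A x /\ meet S L x) ->
  exists p, Kbar S F p /\ forall B, H B -> p B.
Proof.
intros HF HS Hmeet.
destruct (ultrafilter_exists S (fun B => F B \/ H B)) as [p [Hp hp]].
- intros B [h|h]; [exact (filter_sub S F HF B h)|exact (HS B h)].
- intros L hL. destruct (meet_partition S F H L hL) as [L1 [L2 [h1 [h2 h3]]]].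
  destruct (Hmeet L2 _ h2 (filter_meet S F HF L1 h1)) as [x [hx1 hx2]].
  exists x; auto.
- exists p; split; [split; [exact Hp|]|]; auto.
Qed.

(** * Compactness of the closure-bar of a filter *)

Lemma Kbar_nonempty S F : is_filter S F -> exists p, Kbar S F p.
Proof.
intros HF. destruct (ultra_extends S F (fun _ => False)) as [p [Kp _]];
  [exact HF|intros B []| |eauto].
intros L A hL FA. destruct (filter_nonempty S F HF A FA) as [x [Sx Ax]].
exists x; split; [exact Ax|split; [exact Sx|]]. intros B hB; destruct (hL B hB).
Qed.

Lemma Kbar_cover_finite S F (I : Type) (D : I -> rset) : is_filter S F ->
  (forall i, subset (D i) S) -> (forall p, Kbar S F p -> exists i, p (D i)) ->
  exists l, F (fun y => S y /\ exists i, In i l /\ D i y).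
Proof.
intros HF DS Hcov. apply NNPP; intros hn.
destruct (ultra_extends S F (fun B => exists i, B = fun y => S y /\ ~ D i y))
  as [p [[Hp pF] pH]].
- exact HF.
- intros B [i ->] y [Sy _]; exact Sy.
- intros L A hL FA.
  destruct (list_choice rset I (fun B i => B = fun y => S y /\ ~ D i y) L hL) as [l [hl _]].
  apply NNPP; intros hx. apply hn; exists l.
  apply (filter_weaken S F HF A); [exact FA|]. intros y Sy Ay. apply NNPP; intros hy.
  apply hx; exists y; split; [exact Ay|split; [exact Sy|]].
  intros B hB. destruct (hl B hB) as [i [hi ->]]. split; [exact Sy|]. intros Dy; apply hy; eauto.
- destruct (Hcov p (conj Hp pF)) as [i pi].
  exact (ultra_compl_absurd S p Hp _ pi (pH _ (ex_intro _ i eq_refl))).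
Qed.

Lemma Kbar_compact S F : is_filter S F -> Defs.compact S (Kbar S F).
Proof.
intros HF I U Uopen Ucov.
set (J := {iA : I * rset |
          subset (snd iA) S /\ forall q, is_ultra S q -> q (snd iA) -> U (fst iA) q}).
set (D := fun j : J => snd (proj1_sig j)).
assert (DS : forall j, subset (D j) S) by (intros j; exact (proj1 (proj2_sig j))).
destruct (Kbar_cover_finite S F J D HF DS) as [l hl].
- intros p Kp. destruct (Ucov p Kp) as [i Ui]. destruct (Uopen i p Ui) as [Hp [A [pA hA]]].
  exists (exist _ (i, A) (conj (filter_sub S p (ultra_filter S p Hp) A pA) hA)); exact pA.
- exists (map (fun j => fst (proj1_sig j)) l). intros p [Hp pF].
  destruct (ultra_union S p Hp J D l DS (pF _ hl)) as [j [hj pj]].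
  exists (fst (proj1_sig j)); split; [exact (in_map _ l j hj)|].
  destruct j as [[i A] [AS hA]]; exact (hA p Hp pj).
Qed.

Lemma Kbar_chain_inter S F (C : (ufam -> Prop) -> Prop) : is_filter S F -> chain C ->
  (forall X, C X ->
     (exists p, X p) /\ (forall p, X p -> Kbar S F p) /\ (forall p, Cl S X p -> X p)) ->
  exists p, Kbar S F p /\ forall X, C X -> X p.
Proof.
intros HF Cch HC.
destruct (ultra_extends S F (fun B => subset B S /\ exists X, C X /\ forall q, X q -> q B))
  as [p [[Hp pF] pH]]; [exact HF|intros B [BS _]; exact BS| |].
- intros L A hL FA.
  destruct (chain_list_bound _ _ C (fun X Y => forall q, Y q -> X q)
              (fun X B => forall q, X q -> q B) L) as [->|[X [CX hX]]].
  + intros X Y hX hY; destruct (Cch X Y hX hY); auto.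
  + intros X Y B hXY hB q Yq; exact (hB q (hXY q Yq)).
  + intros B hB; exact (proj2 (hL B hB)).
  + destruct (filter_nonempty S F HF A FA) as [x [Sx Ax]].
    exists x; split; [exact Ax|split; [exact Sx|intros B []]].
  + destruct (HC X CX) as [[q Xq] [XK _]]. destruct (XK q Xq) as [Hq qF].
    assert (Fq := ultra_filter S q Hq).
    assert (qL := filter_meet S q Fq L (fun B hB => hX B hB q Xq)).
    destruct (filter_nonempty S q Fq _ (filter_meet2 S q Fq _ _ (qF A FA) qL)) as [x [_ [Ax hx]]].
    exists x; auto.
- exists p; split; [split; assumption|]. intros X CX. destruct (HC X CX) as [_ [XK Xcl]].
  apply Xcl; split; [exact Hp|]. intros A pA. apply NNPP; intros hn.
  assert (AS := filter_sub S p (ultra_filter S p Hp) A pA).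
  apply (ultra_compl_absurd S p Hp A pA), pH. split; [intros x [Sx _]; exact Sx|].
  exists X; split; [exact CX|]. intros q Xq.
  apply ultra_compl; [exact (proj1 (XK q Xq))|exact AS|]. intros qA; apply hn; eauto.
Qed.

Definition inter_fam (S : rset) (X : ufam -> Prop) : ufam :=
  fun A => subset A S /\ forall q, X q -> q A.

Lemma inter_fam_filter S X : (exists q, X q) -> (forall q, X q -> is_filter S q) ->
  is_filter S (inter_fam S X).
Proof.
intros [q0 Xq0] HX. split; [|split; [|split; [|split]]].
- intros A [AS _]; exact AS.
- split; [intros x h; exact h|]. intros q Xq; exact (filter_full S q (HX q Xq)).
- intros [_ h]. destruct (filter_nonempty S q0 (HX q0 Xq0) _ (h q0 Xq0)) as [x [_ []]].
- intros A B [AS hA] [BS hB]. split; [intros x [Ax _]; exact (AS x Ax)|].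
  intros q Xq; exact (filter_meet2 S q (HX q Xq) A B (hA q Xq) (hB q Xq)).
- intros A B [AS hA] AB BS. split; [exact BS|].
  intros q Xq; exact (filter_super S q (HX q Xq) A B (hA q Xq) AB BS).
Qed.

Lemma Cl_Kbar_inter S X p : (forall q, X q -> is_ultra S q) ->
  Cl S X p <-> Kbar S (inter_fam S X) p.
Proof.
intros HX; split.
- intros [Hp HC]; split; [exact Hp|]. intros A [AS hA]. apply NNPP; intros npA.
  destruct (HC _ (ultra_compl S p Hp A AS npA)) as [q [Xq qA]].
  exact (ultra_compl_absurd S q (HX q Xq) A (hA q Xq) qA).
- intros [Hp hp]; split; [exact Hp|]. intros A pA. apply NNPP; intros hn.
  apply (ultra_compl_absurd S p Hp A pA), hp. split; [intros x [Sx _]; exact Sx|].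
  intros q Xq. apply ultra_compl; [exact (HX q Xq)| |].
  + exact (filter_sub S p (ultra_filter S p Hp) A pA).
  +
  intros qA; apply hn; eauto.
Qed.

Lemma Cl_Kbar S F X p : is_filter S F -> (forall q, X q -> Kbar S F q) -> Cl S X p -> Kbar S F p.
Proof.
intros HF HX [Hp HC]; split; [exact Hp|]. intros A FA. apply NNPP; intros npA.
destruct (HC _ (ultra_compl S p Hp A (filter_sub S F HF A FA) npA)) as [q [Xq qA]].
destruct (HX q Xq) as [Hq qF]. exact (ultra_compl_absurd S q Hq A (qF A FA) qA).
Qed.

Lemma Cl_mono S (X Y : ufam -> Prop) p : (forall q, X q -> Y q) -> Cl S X p -> Cl S Y p.
Proof. intros h [Hp H]; split; [exact Hp|]. intros A pA. destruct (H A pA) as [q [a b]]; eauto. Qed.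

(** * The semigroup O^+(S) *)

Definition zero_filter (S : rset) : ufam :=
  fun A => subset A S /\ exists e, 0 < e /\ forall x, S x -> 0 < x -> x < e -> A x.

Lemma zero_filter_filter S : dense_subsemigroup S -> is_filter S (zero_filter S).
Proof.
intros [_ [_ Hd]]. split; [|split; [|split; [|split]]].
- intros A [AS _]; exact AS.
- split; [intros x h; exact h|]. exists 1; split; [lra|intros x Sx _ _; exact Sx].
- intros [_ [e [he h]]]. destruct (Hd 0 e) as [x [Sx [x0 xe]]]; [lra|exact he|].
  exact (h x Sx x0 xe).
- intros A B [AS [e1 [h1 hA]]] [BS [e2 [h2 hB]]]. split; [intros x [Ax _]; exact (AS x Ax)|].
  exists (Rmin e1 e2); split; [apply Rmin_glb_lt; assumption|].
  assert (Rmin e1 e2 <= e1) by apply Rmin_l. assert (Rmin e1 e2 <= e2) by apply Rmin_r.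
  intros x Sx x0 xe; split; [apply hA|apply hB]; auto; lra.
- intros A B [AS [e [he hA]]] AB BS. split; [exact BS|]. exists e; split; auto.
Qed.

Lemma Oplus_Kbar S p : Oplus S p <-> Kbar S (zero_filter S) p.
Proof.
split.
- intros [Hp hp]; split; [exact Hp|]. intros A [AS [e [he hA]]].
  apply (filter_super S p (ultra_filter S p Hp) _ _ (hp e he)); [|exact AS].
  intros x [Sx [x0 xe]]; exact (hA x Sx x0 xe).
- intros [Hp hp]; split; [exact Hp|]. intros e he. apply hp.
  split; [intros x [Sx _]; exact Sx|]. exists e; split; [exact he|]. intros x Sx x0 xe; auto.
Qed.

Lemma Oplus_ultra S p : Oplus S p -> is_ultra S p.
Proof. intros [h _]; exact h. Qed.

Lemma Oplus_filter S p : Oplus S p -> is_filter S p.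
Proof. intros h; exact (ultra_filter S p (Oplus_ultra S p h)). Qed.

Lemma Oplus_exists S : dense_subsemigroup S -> exists p, Oplus S p.
Proof.
intros HS. destruct (Kbar_nonempty S _ (zero_filter_filter S HS)) as [p Kp].
exists p; apply Oplus_Kbar; exact Kp.
Qed.

Section Addition.
Variable S : rset.
Hypothesis HS : dense_subsemigroup S.

Lemma add_closed x y : S x -> S y -> S (x + y).
Proof. destruct HS as [_ [h _]]; auto. Qed.

Lemma uplus_ultra p q : is_ultra S p -> is_ultra S q -> is_ultra S (uplus S p q).
Proof.
intros Hp Hq. assert (Fp := ultra_filter S p Hp). assert (Fq := ultra_filter S q Hq).
unfold uplus. split; [split; [|split; [|split; [|split]]]|].
- intros A [AS _]; exact AS.
- split; [intros x h; exact h|]. apply (filter_weaken S p Fp S); [exact (filter_full S p Fp)|].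
  intros x Sx _. apply (filter_weaken S q Fq S); [exact (filter_full S q Fq)|].
  intros y Sy _; exact (add_closed x y Sx Sy).
- intros [_ h]. destruct (filter_nonempty S p Fp _ h) as [x [_ [_ hq]]].
  destruct (filter_nonempty S q Fq _ hq) as [y [_ [_ []]]].
- intros A B [AS pA] [BS pB]. split; [intros x [Ax _]; exact (AS x Ax)|].
  apply (filter_weaken S p Fp _ _ (filter_meet2 S p Fp _ _ pA pB)). intros x Sx [[_ qA] [_ qB]].
  apply (filter_weaken S q Fq _ _ (filter_meet2 S q Fq _ _ qA qB)). intros y Sy [[_ a] [_ b]].
  split; assumption.
- intros A B [AS pA] AB BS. split; [exact BS|].
  apply (filter_weaken S p Fp _ _ pA). intros x Sx [_ qA].
  apply (filter_weaken S q Fq _ _ qA). intros y Sy [_ a]; exact (AB _ a).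
- intros A AS. destruct (classic (p (fun x => S x /\ q (shift S x A)))) as [h|h];
    [left; split; assumption|right].
  split; [intros x [Sx _]; exact Sx|].
  apply (filter_weaken S p Fp _ _ (ultra_compl S p Hp _ (fun x h => proj1 h) h)). intros x Sx nq.
  assert (nq' : ~ q (shift S x A)) by tauto.
  apply (filter_weaken S q Fq _ _ (ultra_compl S q Hq _ (fun y h => proj1 h) nq')).
  intros y Sy na. split; [exact (add_closed x y Sx Sy)|]. intros a; apply na; split; assumption.
Qed.

Lemma uplus_Oplus p q : Oplus S p -> Oplus S q -> Oplus S (uplus S p q).
Proof.
intros [Hp hp] [Hq hq]. split; [exact (uplus_ultra p q Hp Hq)|]. intros e he.
split; [intros x [Sx _]; exact Sx|].
apply (filter_weaken S p (ultra_filter S p Hp) _ _ (hp (e / 2) ltac:(lra))).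
intros x Sx [_ [x0 xe]].
apply (filter_weaken S q (ultra_filter S q Hq) _ _ (hq (e / 2) ltac:(lra))).
intros y Sy [_ [y0 ye]].
split; [exact (add_closed x y Sx Sy)|split; lra].
Qed.

Lemma uplus_assoc p q r : is_filter S p -> is_filter S q -> is_filter S r ->
  uplus S p (uplus S q r) = uplus S (uplus S p q) r.
Proof.
intros Fp Fq Fr.
assert (shift_add : forall A x y, S x -> S y ->
          r (shift S y (shift S x A)) <-> r (shift S (x + y) A)).
{ intros A x y Sx Sy; split; intros h.
  - apply (filter_weaken S r Fr _ _ h). intros z _ [_ [_ a]]. rewrite Rplus_assoc; exact a.
  - apply (filter_weaken S r Fr _ _ h). intros z Sz [_ a].
    split; [exact (add_closed y z Sy Sz)|rewrite Rplus_assoc in a; exact a]. }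
apply functional_extensionality; intro A; apply propositional_extensionality.
unfold uplus; split.
- intros [AS h]. split; [exact AS|]. split; [intros z [Sz _]; exact Sz|].
  apply (filter_weaken S p Fp _ _ h). intros x Sx [_ [_ hq]].
  apply (filter_weaken S q Fq _ _ hq). intros y Sy a.
  split; [exact (add_closed x y Sx Sy)|apply shift_add; [exact Sx|exact Sy|exact (proj2 a)]].
- intros [AS [_ h]]. split; [exact AS|].
  apply (filter_weaken S p Fp _ _ h). intros x Sx [_ hq].
  split; [intros z [Sz _]; exact Sz|].
  apply (filter_weaken S q Fq _ _ hq). intros y Sy [_ [_ a]]. apply shift_add; assumption.
Qed.

End Addition.

Definition translate (S : rset) (q : ufam) : ufam -> Prop :=
  fun p => exists s, Oplus S s /\ uplus S s q = p.

Lemma translate_closed S q p : dense_subsemigroup S -> is_ultra S q ->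
  Cl S (translate S q) p -> translate S q p.
Proof.
intros HS Hq [Hp HC].
assert (Fp := ultra_filter S p Hp). assert (Fq := ultra_filter S q Hq).
set (D := fun A x => S x /\ q (shift S x A)).
destruct (ultra_extends S (zero_filter S) (fun B => exists A, p A /\ B = D A)) as [s [Ks sD]].
- exact (zero_filter_filter S HS).
- intros B [A [_ ->]] x [Sx _]; exact Sx.
- intros L A0 hL zA0.
  destruct (list_choice rset rset (fun B A => p A /\ B = D A) L hL) as [As [h1 h2]].
  assert (pM : p (meet S As)) by (apply (filter_meet S p Fp); intros A hA;
                                  destruct (h2 A hA) as [B [_ [pA _]]]; exact pA).
  destruct (HC _ pM) as [p' [[s' [Os' <-]] [_ s'M]]].
  apply Oplus_Kbar in Os'. destruct Os' as [Hs' s'zero]. assert (Fs' := ultra_filter S s' Hs').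
  destruct (filter_nonempty S s' Fs' _ (filter_meet2 S s' Fs' _ _ (s'zero A0 zA0) s'M))
    as [x [Sx [A0x [_ qM]]]].
  exists x; split; [exact A0x|split; [exact Sx|]].
  intros B hB. destruct (h1 B hB) as [A [hA [_ ->]]]. split; [exact Sx|].
  apply (filter_weaken S q Fq _ _ qM). intros y _ [_ [_ hy]]; exact (hy A hA).
- assert (Os : Oplus S s) by (apply Oplus_Kbar; exact Ks).
  exists s; split; [exact Os|]. symmetry; apply (ultra_ext S); auto.
  + exact (uplus_ultra S HS s q (Oplus_ultra S s Os) Hq).
  + intros A pA. split; [exact (filter_sub S p Fp A pA)|]. apply sD; exists A; auto.
Qed.

(** * Minimal left ideals of O^+(S) *)

Definition closed_left_ideal (S : rset) (L : ufam -> Prop) : Prop :=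
  (exists p, L p) /\ (forall p, L p -> Oplus S p) /\ (forall p, Cl S L p -> L p) /\
  (forall r q, Oplus S r -> L q -> L (uplus S r q)).

Lemma translate_closed_left_ideal S q : dense_subsemigroup S -> Oplus S q ->
  closed_left_ideal S (translate S q).
Proof.
intros HS Oq. split; [|split; [|split]].
- destruct (Oplus_exists S HS) as [s Os]. exists (uplus S s q), s; auto.
- intros p [s [Os <-]]. exact (uplus_Oplus S HS s q Os Oq).
- intros p hp. exact (translate_closed S q p HS (Oplus_ultra S q Oq) hp).
- intros r p Or [s [Os <-]]. exists (uplus S r s); split; [exact (uplus_Oplus S HS r s Or Os)|].
  symmetry; apply uplus_assoc; auto; apply Oplus_filter; assumption.
Qed.

Lemma minimal_closed_left_ideal S : dense_subsemigroup S ->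
  exists L, closed_left_ideal S L /\
    forall L', closed_left_ideal S L' -> (forall p, L' p -> L p) -> forall p, L p -> L' p.
Proof.
intros HS. apply (Zorn_inter ufam (Oplus S)); [intros L [_ [h _]]; exact h|].
intros C CL Cch. split; [|split; [|split]].
- destruct (Kbar_chain_inter S (zero_filter S) C (zero_filter_filter S HS) Cch) as [p [Kp Cp]].
  + intros L CL'. destruct (CL L CL') as [ne [LO [Lcl _]]]. split; [exact ne|split; [|exact Lcl]].
    intros p Lp; apply Oplus_Kbar, LO, Lp.
  + exists p; split; [apply Oplus_Kbar; exact Kp|exact Cp].
- intros p [Op _]; exact Op.
- intros p hp. split.
  + apply Oplus_Kbar.
    apply (Cl_Kbar S (zero_filter S) (fun x => Oplus S x /\ forall L, C L -> L x) p);
      [exact (zero_filter_filter S HS)| |exact hp].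
    intros q [Oq _]; apply Oplus_Kbar; exact Oq.
  + intros L CL'. destruct (CL L CL') as [_ [_ [Lcl _]]]. apply Lcl.
    exact (Cl_mono S _ L p (fun q h => proj2 h L CL') hp).
- intros r q Or [Oq hq]. split; [exact (uplus_Oplus S HS r q Or Oq)|].
  intros L CL'. destruct (CL L CL') as [_ [_ [_ Lid]]]. exact (Lid r q Or (hq L CL')).
Qed.

(* The left ideal O^+(S) + q is minimal; by [K_Oplus_eq] these q are the points of K(O^+(S)). *)
Definition Kpoint (S : rset) (q : ufam) : Prop :=
  Oplus S q /\ forall r, Oplus S r -> exists s, Oplus S s /\ uplus S s (uplus S r q) = q.

Lemma Kpoint_exists S : dense_subsemigroup S -> exists q, Kpoint S q.
Proof.
intros HS. destruct (minimal_closed_left_ideal S HS) as [L [[[q Lq] [LO [_ Lid]]] Lmin]].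
exists q; split; [exact (LO q Lq)|]. intros r Or.
assert (Orq := uplus_Oplus S HS r q Or (LO q Lq)).
apply (Lmin (translate S (uplus S r q)) (translate_closed_left_ideal S _ HS Orq)); [|exact Lq].
intros p [s [Os <-]]. exact (Lid s _ Os (Lid r q Or Lq)).
Qed.

Section Kpoints.
Variable S : rset.
Hypothesis HS : dense_subsemigroup S.

Lemma Kpoint_uplus_l u q : Oplus S u -> Kpoint S q -> Kpoint S (uplus S u q).
Proof.
intros Ou [Oq Mq]. split; [exact (uplus_Oplus S HS u q Ou Oq)|]. intros r Or.
destruct (Mq (uplus S r u) (uplus_Oplus S HS r u Or Ou)) as [s [Os e]].
exists (uplus S u s); split; [exact (uplus_Oplus S HS u s Ou Os)|].
rewrite (uplus_assoc S HS r u q), <- (uplus_assoc S HS u s), e;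
  auto using Oplus_filter, uplus_Oplus.
Qed.

Lemma Kpoint_uplus_r q u : Kpoint S q -> Oplus S u -> Kpoint S (uplus S q u).
Proof.
intros [Oq Mq] Ou. split; [exact (uplus_Oplus S HS q u Oq Ou)|]. intros r Or.
destruct (Mq r Or) as [s [Os e]]. exists s; split; [exact Os|].
rewrite (uplus_assoc S HS r q u), (uplus_assoc S HS s (uplus S r q) u), e;
  auto using Oplus_filter, uplus_Oplus.
Qed.

Lemma K_Oplus_eq : K_Oplus S = Kpoint S.
Proof.
apply functional_extensionality; intro q; apply propositional_extensionality. split.
- intros [Oq Kq]. apply Kq. split; [intros p [Op _]; exact Op|split; [|split]].
  + exact (Kpoint_exists S HS).
  + intros p q' Op Mq'; exact (Kpoint_uplus_l p q' Op Mq').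
  + intros p q' Mp Oq'; exact (Kpoint_uplus_r p q' Mp Oq').
- intros [Oq Mq]. split; [exact Oq|]. intros I [IO [[r Ir] [Il Ir']]].
  destruct (Mq r (IO r Ir)) as [s [Os <-]]. exact (Il s _ Os (Ir' r q Ir Oq)).
Qed.

End Kpoints.

(** * Piecewise syndeticity near zero *)

Lemma inv_INR_pos n : (1 <= n)%nat -> 0 < / INR n.
Proof. intros h. apply Rinv_0_lt_compat, lt_0_INR; lia. Qed.

Lemma inv_INR_eventually_lt g : 0 < g -> exists N, forall n, (N <= n)%nat -> / INR n < g.
Proof.
intros hg. destruct (INR_archimed 1 (/ g)) as [m hm]; [lra|].
exists (Datatypes.S m). intros n hn.
assert (h1 : INR (Datatypes.S m) <= INR n) by (apply le_INR; exact hn).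
rewrite S_INR in h1. assert (h3 : 0 < / g) by (apply Rinv_0_lt_compat; exact hg).
rewrite <- (Rinv_inv g). apply Rinv_lt_contravar; [apply Rmult_lt_0_compat|]; lra.
Qed.

Lemma Kpoint_syndetic_step S q A eps : dense_subsemigroup S -> Kpoint S q -> q A -> 0 < eps ->
  exists Fl delta, Fl <> nil /\ (forall t, In t Fl -> S t /\ 0 < t /\ t < eps) /\
    0 < delta /\ delta < eps /\
    forall g, S g -> 0 < g -> g < delta ->
      q (fun y => S y /\ exists t, In t Fl /\ shift S t A (g + y)).
Proof.
intros HS [Oq Mq] qA he.
set (Small := {x : R | S x /\ 0 < x /\ x < eps}).
set (D := fun (i : Small) y => S y /\ q (shift S y (shift S (proj1_sig i) A))).
(* As q = s + r + q, every r in O^+(S) contains some D x; by compactness finitely many D x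
   cover a neighbourhood of zero. *)
destruct (Kbar_cover_finite S (zero_filter S) Small D (zero_filter_filter S HS))
  as [l [_ [eta [heta cov]]]].
- intros i y [Sy _]; exact Sy.
- intros r Kr. apply Oplus_Kbar in Kr. destruct (Mq r Kr) as [s [Os e]].
  rewrite <- e in qA. destruct qA as [_ sA]. assert (Fs := Oplus_filter S s Os).
  destruct (filter_nonempty S s Fs _ (filter_meet2 S s Fs _ _ sA (proj2 Os eps he)))
    as [x [_ [[Sx [_ rD]] [_ [x0 xe]]]]].
  exists (exist _ x (conj Sx (conj x0 xe))). exact rD.
- set (delta := Rmin eta (eps / 2)).
  assert (hd : 0 < delta) by (apply Rmin_glb_lt; lra).
  assert (hd1 : delta <= eta) by apply Rmin_l. assert (hd2 : delta <= eps / 2) by apply Rmin_r.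
  exists (map (@proj1_sig _ _) l), delta. split; [|split; [|split; [exact hd|split; [lra|]]]].
  + destruct (proj2 (proj2 HS) 0 delta) as [y [Sy [y0 yd]]]; [lra|exact hd|].
    destruct (cov y Sy y0 ltac:(lra)) as [_ [i [il _]]].
    destruct l; [destruct il|discriminate].
  + intros t ht. apply in_map_iff in ht. destruct ht as [[x hx] [<- _]]. exact hx.
  + intros g Sg g0 gd. destruct (cov g Sg g0 ltac:(lra)) as [_ [i [il [_ qi]]]].
    apply (filter_weaken S q (Oplus_filter S q Oq) _ _ qi). intros y _ [_ a].
    exists (proj1_sig i); split; [exact (in_map _ l i il)|exact a].
Qed.

(* Only the finitely many n with 1/n > g impose a condition. *)
Lemma filter_meet_conditional S F (c : nat -> R) (P : nat -> R -> Prop) g : is_filter S F ->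
  0 < g -> (forall n, (1 <= n)%nat -> c n < / INR n) ->
  (forall n, (1 <= n)%nat -> g < c n -> F (fun x => S x /\ P n x)) ->
  F (fun x => S x /\ forall n, (1 <= n)%nat -> g < c n -> P n x).
Proof.
intros HF g0 hc hP. destruct (inv_INR_eventually_lt g g0) as [N hN].
set (E := fun n x => S x /\ ((1 <= n)%nat -> g < c n -> P n x)).
apply (filter_weaken S F HF (meet S (map E (seq 0 N)))).
- apply (filter_meet S F HF). intros B hB. apply in_map_iff in hB. destruct hB as [n [<- _]].
  destruct (classic ((1 <= n)%nat /\ g < c n)) as [[hn gc]|h].
  + apply (filter_weaken S F HF _ _ (hP n hn gc)). intros y _ [_ hy] _ _; exact hy.
  + apply (filter_weaken S F HF S _ (filter_full S F HF)). intros y _ _ hn gc.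
    exfalso; apply h; split; assumption.
- intros x _ [_ hx] n hn gc. destruct (Compare_dec.le_lt_dec N n) as [hNn|hnN].
  + specialize (hc n hn). specialize (hN n hNn). lra.
  + apply (hx (E n)); [apply in_map, in_seq; lia|exact hn|exact gc].
Qed.

Lemma Kpoint_PSNZ S q A : dense_subsemigroup S -> Kpoint S q -> q A -> PSNZ S A.
Proof.
intros HS Kq qA. assert (Fq := Oplus_filter S q (proj1 Kq)).
destruct (choice (fun n (Fd : list R * R) => (1 <= n)%nat ->
   fst Fd <> nil /\ (forall t, In t (fst Fd) -> S t /\ 0 < t /\ t < / INR n) /\
   0 < snd Fd /\ snd Fd < / INR n /\
   forall g, S g -> 0 < g -> g < snd Fd ->
     q (fun y => S y /\ exists t, In t (fst Fd) /\ shift S t A (g + y)))) as [Fd hFd].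
{ intros n. destruct (Compare_dec.le_lt_dec 1 n) as [hn|hn].
  - destruct (Kpoint_syndetic_step S q A (/ INR n) HS Kq qA (inv_INR_pos n hn)) as [Fl [d h]].
    exists (Fl, d); intros _; exact h.
  - exists (nil, 0); intros h; lia. }
exists (fun n => fst (Fd n)), (fun n => snd (Fd n)). split.
- intros n hn. destruct (hFd n hn) as [h1 [h2 [h3 [h4 _]]]]; auto.
- intros G mu _ GS hmu.
  set (Hg := fun g x => S x /\ forall n, (1 <= n)%nat -> g < snd (Fd n) ->
                          exists t, In t (fst (Fd n)) /\ shift S t A (g + x)).
  assert (qH : forall g, S g -> q (Hg g)).
  { intros g Sg. apply (filter_meet_conditional S q (fun n => snd (Fd n)));
      [exact Fq|exact (proj1 HS g Sg)| |].
    - intros n hn; exact (proj1 (proj2 (proj2 (proj2 (hFd n hn))))).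
    - intros n hn gd. exact (proj2 (proj2 (proj2 (proj2 (hFd n hn)))) g Sg (proj1 HS g Sg) gd). }
  assert (qG : q (meet S (map Hg G))).
  { apply (filter_meet S q Fq). intros B hB. apply in_map_iff in hB.
    destruct hB as [g [<- hg]]. exact (qH g (GS g hg)). }
  destruct (filter_nonempty S q Fq _ (filter_meet2 S q Fq _ _ (proj2 (proj1 Kq) mu hmu) qG))
    as [x [Sx [[_ [x0 xm]] [_ hx]]]].
  exists x; split; [exact Sx|split; [exact x0|split; [exact xm|]]].
  intros n hn g hg _ gd. exact (proj2 (hx (Hg g) (in_map Hg G g hg)) n hn gd).
Qed.

Lemma Oplus_near_zero S T : dense_subsemigroup S -> subset T S ->
  (forall e, 0 < e -> exists t, T t /\ 0 < t /\ t < e) -> exists v, Oplus S v /\ v T.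
Proof.
intros HS TS HT.
destruct (ultra_extends S (zero_filter S) (fun B => B = T)) as [v [Kv vT]].
- exact (zero_filter_filter S HS).
- intros B ->; exact TS.
- intros L A hL [_ [e [he hA]]]. destruct (HT e he) as [t [Tt [t0 te]]].
  exists t; split; [exact (hA t (TS t Tt) t0 te)|split; [exact (TS t Tt)|]].
  intros B hB; rewrite (hL B hB); exact Tt.
- exists v; split; [apply Oplus_Kbar; exact Kv|exact (vT T eq_refl)].
Qed.

Lemma PSNZ_Oplus_point S A (F : nat -> list R) (delta : nat -> R) : dense_subsemigroup S ->
  (forall (G : list R) (mu : R), G <> nil -> (forall g, In g G -> S g) -> 0 < mu ->
     exists x, S x /\ 0 < x /\ x < mu /\
       forall n, (1 <= n)%nat -> forall g, In g G -> 0 < g -> g < delta n ->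
         exists t, In t (F n) /\ shift S t A (g + x)) ->
  exists r, Oplus S r /\ forall n g, (1 <= n)%nat -> S g -> 0 < g -> g < delta n ->
    r (fun x => S x /\ exists t, In t (F n) /\ shift S t A (g + x)).
Proof.
intros HS Hsyn.
set (W := fun n g x => S x /\ exists t, In t (F n) /\ shift S t A (g + x)).
set (Wg := fun B g => exists n, (1 <= n)%nat /\ S g /\ 0 < g /\ g < delta n /\ B = W n g).
destruct (ultra_extends S (zero_filter S) (fun B => exists g, Wg B g)) as [r [Kr rW]].
- exact (zero_filter_filter S HS).
- intros B [g [n [_ [_ [_ [_ ->]]]]]] x [Sx _]; exact Sx.
- intros L A0 hL [_ [e [he hA0]]].
  destruct (list_choice rset R Wg L hL) as [G [h1 h2]].
  destruct (proj2 (proj2 HS) 0 1) as [g1 [Sg1 _]]; [lra|lra|].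
  destruct (Hsyn (g1 :: G) e) as [x [Sx [x0 [xe hx]]]]; [discriminate| |exact he|].
  { intros g [<-|hg]; [exact Sg1|]. destruct (h2 g hg) as [B [_ [n [_ [Sg _]]]]]; exact Sg. }
  exists x; split; [exact (hA0 x Sx x0 xe)|split; [exact Sx|]].
  intros B hB. destruct (h1 B hB) as [g [hg [n [hn [_ [g0 [gd ->]]]]]]].
  split; [exact Sx|exact (hx n hn g (or_intror hg) g0 gd)].
- exists r; split; [apply Oplus_Kbar; exact Kr|].
  intros n g hn Sg g0 gd. apply rW; exists g, n; auto.
Qed.

Lemma PSNZ_Kpoint S A : dense_subsemigroup S -> subset A S -> PSNZ S A ->
  exists q, Kpoint S q /\ q A.
Proof.
intros HS AS [F [delta [hF hsyn]]].
destruct (PSNZ_Oplus_point S A F delta HS hsyn) as [r [Or hr]].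
destruct (Kpoint_exists S HS) as [q0 [Oq0 Mq0]].
set (w := uplus S q0 r).
assert (Kw : Kpoint S w) by exact (Kpoint_uplus_r S HS q0 r (conj Oq0 Mq0) Or).
assert (Uw : is_ultra S w) by exact (Oplus_ultra S w (proj1 Kw)).
assert (tn : forall n, (1 <= n)%nat -> exists t, In t (F n) /\ w (shift S t A)).
{ intros n hn. destruct (hF n hn) as [_ [_ [d0 _]]].
  apply (ultra_union S w Uw R (fun t => shift S t A) (F n)); [intros t y [Sy _]; exact Sy|].
  split; [intros y [Sy _]; exact Sy|].
  apply (filter_weaken S q0 (Oplus_filter S q0 Oq0) _ _ (proj2 Oq0 (delta n) d0)).
  intros g Sg [_ [g0 gd]].
  apply (filter_weaken S r (Oplus_filter S r Or) _ _ (hr n g hn Sg g0 gd)).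
  intros x Sx [_ [t [ht [Sgx a]]]].
  split; [exact (add_closed S HS g x Sg Sx)|exists t; split; [exact ht|split; assumption]]. }
destruct (Oplus_near_zero S (fun t => S t /\ w (shift S t A)) HS) as [v [Ov vT]].
- intros t [St _]; exact St.
- intros e he. destruct (inv_INR_eventually_lt e he) as [N hN].
  destruct (tn (N + 1)%nat ltac:(lia)) as [t [ht wt]].
  destruct (hF (N + 1)%nat ltac:(lia)) as [_ [hFt _]]. destruct (hFt t ht) as [St [t0 tlt]].
  specialize (hN (N + 1)%nat ltac:(lia)).
  exists t; split; [split; assumption|split; [exact t0|lra]].
- exists (uplus S v w). split; [exact (Kpoint_uplus_l S HS v w Ov Kw)|split; assumption].
Qed.

Lemma Kfam_eq S : dense_subsemigroup S -> Kfam S = inter_fam S (Kpoint S).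
Proof.
intros HS. apply functional_extensionality; intro A; apply propositional_extensionality. split.
- intros [AS nP]. split; [exact AS|]. intros q Kq. apply NNPP; intros nqA.
  apply nP, (Kpoint_PSNZ S q); [exact HS|exact Kq|].
  exact (ultra_compl S q (Oplus_ultra S q (proj1 Kq)) A AS nqA).
- intros [AS hA]. split; [exact AS|]. intros hP.
  destruct (PSNZ_Kpoint S _ HS (fun x h => proj1 h) hP) as [q [Kq qnA]].
  exact (ultra_compl_absurd S q (Oplus_ultra S q (proj1 Kq)) A (hA q Kq) qnA).
Qed.

Lemma Cl_Kpoint_uplus S p q : dense_subsemigroup S ->
  Cl S (Kpoint S) p -> Cl S (Kpoint S) q -> Cl S (Kpoint S) (uplus S p q).
Proof.
intros HS [Hp Cp] Cq.
assert (Oq : Oplus S q).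
{ apply Oplus_Kbar, (Cl_Kbar S (zero_filter S) (Kpoint S));
    [exact (zero_filter_filter S HS)| |exact Cq].
  intros k [Ok _]; apply Oplus_Kbar; exact Ok. }
split; [exact (uplus_ultra S HS p q Hp (Oplus_ultra S q Oq))|].
intros A [AS pA]. destruct (Cp _ pA) as [k [Kk kA]].
exists (uplus S k q); split; [exact (Kpoint_uplus_r S HS k q Kk Oq)|split; assumption].
Qed.

Theorem lemma3p5 (S : rset) (HS : dense_subsemigroup S) :
  is_filter S (Kfam S) /\
  (forall p, Cl S (K_Oplus S) p <-> Kbar S (Kfam S) p) /\
  compact_subsemigroup S (Kbar S (Kfam S)).
Proof.
assert (Kultra : forall q, Kpoint S q -> is_ultra S q)
  by (intros q [Oq _]; exact (Oplus_ultra S q Oq)).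
assert (ClK : forall p, Cl S (Kpoint S) p <-> Kbar S (Kfam S) p).
{ intros p. rewrite (Kfam_eq S HS). exact (Cl_Kbar_inter S _ p Kultra). }
assert (Kfilter : is_filter S (Kfam S)).
{ rewrite (Kfam_eq S HS). apply inter_fam_filter; [exact (Kpoint_exists S HS)|].
  intros q Kq; exact (ultra_filter S q (Kultra q Kq)). }
rewrite (K_Oplus_eq S HS).
split; [exact Kfilter|split; [exact ClK|split; [|split; [|split]]]].
- intros p [Hp _]; exact Hp.
- destruct (Kpoint_exists S HS) as [q Kq]. exists q. apply (ClK q).
  split; [exact (Kultra q Kq)|]. intros A qA; exists q; auto.
- intros p q hp hq. apply (ClK (uplus S p q)), Cl_Kpoint_uplus;
    [exact HS|apply (ClK p), hp|apply (ClK q), hq].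
- exact (Kbar_compact S _ Kfilter).
Qed.
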